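(* If $n\equiv 2\pmod 4$, then the graph $2Q_{n-1}$ is $\left(\frac{n(2^n+1)}{2}-2^n,\,1\right)$-distance antimagic. If $n\equiv 1\pmod 4$, then $2Q_{n-1}$ is $\left(\frac{(n+1)(2^n+1)}{2}-2^n,\,1\right)$-closed distance antimagic.
   Context: $Q_m$ is the $m$-dimensional hypercube (vertex set $\mathbb{F}_2^m$, adjacency iff differing in exactly one coordinate), and $2Q_{n-1}$ is the disjoint union of two copies of $Q_{n-1}$, a graph of order $2^n$. For a graph $G$ of order $N$, a set of distances $D$, and a bijection $f:V(G)\to\{1,\dots,N\}$, the weight of $x$ is $w(x)=\sum_{y\in N_D(x)}f(y)$ where $N_D(x)$ is the set of vertices at distance in $D$ from $x$. $f$ is an $(\alpha,\delta)$-$D$-antimagic labeling if the weights are pairwise distinct and $\{w(x)\}$ forms an arithmetic progression starting at $\alpha$ with difference $\delta>0$; a graph is $(\alpha,\delta)$-distance antimagic (resp. $(\alpha,\delta)$-closed distance antimagic) if it admits such a labeling with $D=\{1\}$ (resp. $D=\{0,1\}$). *)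

From mathcomp Require Import all_boot.
Set Implicit Arguments. Unset Strict Implicit. Unset Printing Implicit Defensive.

Definition hcube_adj (m : nat) (x y : {ffun 'I_m -> bool}) : bool :=
  #|[set i | x i != y i]| == 1.

(* 2Q_m: disjoint union of two copies of Q_m; vertex = (copy index, hypercube vertex). *)
Definition twoQ_vert (m : nat) := (bool * {ffun 'I_m -> bool})%type.
Definition twoQ_adj (m : nat) (u v : twoQ_vert m) : bool :=
  (u.1 == v.1) && hcube_adj u.2 v.2.

(* D-neighbourhoods for D = {1} (open) and D = {0,1} (closed):
   distance 1 = adjacent, distance 0 = equal. *)
Definition open_nbhd (T : finType) (adj : rel T) (x : T) : {set T} :=
  [set y | adj x y].
Definition closed_nbhd (T : finType) (adj : rel T) (x : T) : {set T} :=
  [set y | (y == x) || adj x y].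

Definition weight (T : finType) (N : T -> {set T}) (f : T -> nat) (x : T) : nat :=
  \sum_(y in N x) f y.

Definition labeling (T : finType) (f : T -> nat) : Prop :=
  injective f /\ (forall x, 1 <= f x <= #|T|).

Definition ad_antimagic_labeling (T : finType) (N : T -> {set T})
    (alpha delta : nat) (f : T -> nat) : Prop :=
  labeling f /\ 0 < delta /\
  injective (weight N f) /\
  (forall x, exists2 k, k < #|T| & weight N f x = alpha + k * delta).

Definition distance_antimagic (T : finType) (adj : rel T) (alpha delta : nat) : Prop :=
  exists f : T -> nat, ad_antimagic_labeling (open_nbhd adj) alpha delta f.

Definition closed_distance_antimagic (T : finType) (adj : rel T) (alpha delta : nat) : Prop :=
  exists f : T -> nat, ad_antimagic_labeling (closed_nbhd adj) alpha delta f.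

From mathcomp Require Import all_boot zify.
Set Implicit Arguments. Unset Strict Implicit. Unset Printing Implicit Defensive.

(* Label v by 1 + [bin (L v)], the integer with binary digits L v, for an
   injective F_2-linear map L : F_2 x F_2^m -> F_2^(m+1). The neighbours of v
   are the v + e_i, so digit j of the sum of the neighbour labels (plus the
   label of v itself, c = 1, for closed neighbourhoods) is
   c z + #{i | z <> (L e_i)_j}, z being digit j of L v. If m + c = 2k + 1 and
   every row of the matrix (L e_i)_i has k or k + 1 ones, this digit is
   k + (z xor [row j has k + 1 ones]). So all weights are one constant plus
   [bin] of a fixed translate of L v, and they form an interval of consecutive
   integers. For even k with 2k <= m, [code] below is such a map. *)

Definition flip_coord m (i : 'I_m) (x : {ffun 'I_m -> bool}) : {ffun 'I_m -> bool} :=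
  [ffun j => x j (+) (j == i)].

Definition twoQ_flip m (i : 'I_m) (v : twoQ_vert m) : twoQ_vert m :=
  (v.1, flip_coord i v.2).

Lemma twoQ_adjE m (v y : twoQ_vert m) :
  twoQ_adj v y = (y \in [set twoQ_flip i v | i : 'I_m]).
Proof.
apply/andP/imsetP => [[/eqP e1 /cards1P [i Hi]] | [i _ ->]].
- exists i => //; case: v y e1 Hi => b x [b' y] /= -> Hi; congr pair.
  apply/ffunP => j; rewrite ffunE.
  have /= := congr1 (fun S : {set 'I_m} => j \in S) Hi; rewrite !inE.
  by case: (j == i); case: (x j); case: (y j).
- split=> //=; apply/eqP.
  suff -> : [set j | v.2 j != flip_coord i v.2 j] = [set i] by rewrite cards1.
  by apply/setP => j; rewrite !inE ffunE; case: (v.2 j); case: (j == i).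
Qed.

Lemma twoQ_flip_inj m (v : twoQ_vert m) :
  injective (fun i : 'I_m => twoQ_flip i v).
Proof.
move=> i i' /(congr1 (fun w : twoQ_vert m => w.2 i)); rewrite !ffunE eqxx.
by case: eqP => // _; case: (v.2 i).
Qed.

Lemma weight_open_twoQ m (g : twoQ_vert m -> nat) v :
  weight (open_nbhd (@twoQ_adj m)) g v = \sum_(i < m) g (twoQ_flip i v).
Proof.
rewrite /weight /open_nbhd.
rewrite (_ : [set y | _] = [set twoQ_flip i v | i : 'I_m]); last first.
  by apply/setP => y; rewrite inE twoQ_adjE.
by rewrite big_imset //; move=> i j _ _; apply: twoQ_flip_inj.
Qed.

Lemma weight_closed_twoQ m (g : twoQ_vert m -> nat) v :
  weight (closed_nbhd (@twoQ_adj m)) g v = g v + \sum_(i < m) g (twoQ_flip i v).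
Proof.
rewrite -weight_open_twoQ /weight /closed_nbhd /open_nbhd.
rewrite (_ : [set y | _] = v |: [set y | twoQ_adj v y]); last first.
  by apply/setP => y; rewrite !inE.
rewrite big_setU1 // inE /twoQ_adj eqxx /hcube_adj.
by rewrite (_ : [set i | _] = set0) ?cards0 //; apply/setP => i; rewrite !inE eqxx.
Qed.

Definition bin N (g : nat -> bool) : nat := \sum_(j < N) g j * 2 ^ j.

Lemma binS N g : bin N.+1 g = g 0 + (bin N (fun j => g j.+1)).*2.
Proof.
rewrite /bin big_ord_recl muln1 -mul2n big_distrr /=; congr (_ + _).
by apply: eq_bigr => j _; rewrite expnS mulnCA.
Qed.

Lemma bin_ltn N g : bin N g < 2 ^ N.
Proof.
elim: N g => [|N IH] g; first by rewrite /bin big_ord0.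
by rewrite binS expnS; have := IH (fun j => g j.+1); case: (g 0) => /=; lia.
Qed.

Lemma bin_inj N g h : bin N g = bin N h -> forall j, j < N -> g j = h j.
Proof.
elim: N g h => [|N IH] g h //; rewrite !binS => E.
have E0 : g 0 = h 0 by move: E; case: (g 0); case: (h 0) => //=; lia.
move: E; rewrite E0 => /addnI /double_inj /IH E1 [|j] //; exact: E1.
Qed.

Lemma sum_exp2 N : \sum_(j < N) 2 ^ j = 2 ^ N - 1.
Proof.
elim: N => [|N IH]; first by rewrite big_ord0.
by rewrite big_ord_recr /= IH expnS; have := expn_gt0 2 N; lia.
Qed.

Lemma sum_bits_leq N (p : 'I_N -> bool) : \sum_(i < N) (p i : nat) <= N.
Proof. by rewrite -[leqRHS]card_ord -sum1_card leq_sum // => i _; case: (p i). Qed.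

Lemma sum_addb N (z : bool) (p : 'I_N -> bool) :
  \sum_(i < N) (z (+) p i : nat) =
    if z then N - \sum_(i < N) p i else \sum_(i < N) p i.
Proof.
case: z => //.
have : \sum_(i < N) (true (+) p i : nat) + \sum_(i < N) (p i : nat) = N.
  rewrite -big_split /= -[RHS]card_ord -sum1_card.
  by apply: eq_bigr => i _; case: (p i).
lia.
Qed.

Lemma sum_flip N (p : nat -> bool) i : i < N ->
  \sum_(j < N) (p j (+) (j == i :> nat) : nat) + p i = \sum_(j < N) p j + ~~ p i.
Proof.
move=> iN; rewrite (bigD1 (Ordinal iN)) // [in RHS](bigD1 (Ordinal iN)) //= eqxx.
rewrite (eq_bigr (fun j : 'I_N => p j : nat)); last first.
  by move=> j /negbTE ji; rewrite -val_eqE /= in ji; rewrite ji addbF.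
by case: (p i) => /=; lia.
Qed.

Lemma sum_ltn N a : \sum_(j < N) (j < a : nat) = minn a N.
Proof.
elim: N => [|N IH]; first by rewrite big_ord0 minn0.
by rewrite big_ord_recr /= IH; case: (ltnP N a) => H /=; clear IH; lia.
Qed.

Definition parity N (g : nat -> bool) : bool := odd (\sum_(j < N) g j).

Lemma parity_flip N g i :
  parity N (fun j => g j (+) (j == i :> nat)) = parity N g (+) (i < N).
Proof.
rewrite /parity; case: (ltnP i N) => [iN|Ni].
  move: (congr1 odd (sum_flip g iN)); rewrite !oddD.
  by case: (g i); case: (odd (\sum_(j < N) g j)); case: (odd _).
rewrite addbF; congr odd; apply: eq_bigr => j _.
rewrite (_ : j == i :> nat = false) ?addbF //.
by apply/negbTE; rewrite neq_ltn (leq_trans _ Ni).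
Qed.

Lemma parity_addb N g b :
  parity N (fun j => g j (+) b) = parity N g (+) (odd N && b).
Proof.
rewrite /parity (eq_bigr (fun j : 'I_N => b (+) g j : nat)); last first.
  by move=> j _; rewrite addbC.
rewrite sum_addb; case: b; rewrite ?andbF ?addbF ?andbT //.
by rewrite oddB ?sum_bits_leq // addbC.
Qed.

Section BalancedCode.

Variables (m c k : nat) (Z : twoQ_vert m -> nat -> bool) (S : nat -> 'I_m -> bool).
Hypothesis mcE : m + c = k.*2.+1.
Hypothesis c_le1 : c <= 1.
Hypothesis Z_inj : forall u v, (forall j, j < m.+1 -> Z u j = Z v j) -> u = v.
Hypothesis Z_flip : forall v i j, Z (twoQ_flip i v) j = Z v j (+) S j i.
Hypothesis S_balanced : forall j, j < m.+1 -> k <= \sum_(i < m) S j i <= k.+1.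

Let heavy j := \sum_(i < m) S j i == k.+1.

Lemma balanced_bit_sum j (z : bool) : j < m.+1 ->
  c * z + \sum_(i < m) (z (+) S j i : nat) = k + (z (+) heavy j).
Proof.
move=> /S_balanced; rewrite /heavy sum_addb.
have := sum_bits_leq (S j).
move: (\sum_(i < m) _) => s sm /andP[ks sk].
case: z; case: eqP => /=; lia.
Qed.

Lemma flip_label_sum v :
  c * (bin m.+1 (Z v)).+1 + \sum_(i < m) (bin m.+1 (Z (twoQ_flip i v))).+1 =
  m + c + k * (2 ^ m.+1 - 1) + bin m.+1 (fun j => Z v j (+) heavy j).
Proof.
have flips : \sum_(i < m) bin m.+1 (Z (twoQ_flip i v)) =
    \sum_(j < m.+1) (\sum_(i < m) (Z v j (+) S j i : nat)) * 2 ^ j.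
  rewrite /bin exchange_big /=; apply: eq_bigr => j _.
  by rewrite big_distrl /=; apply: eq_bigr => i _; rewrite Z_flip.
have bits : c * bin m.+1 (Z v) + \sum_(i < m) bin m.+1 (Z (twoQ_flip i v)) =
    k * (2 ^ m.+1 - 1) + bin m.+1 (fun j => Z v j (+) heavy j).
  rewrite flips /bin -sum_exp2 !big_distrr -!big_split.
  by apply: eq_bigr => j _ /=; rewrite mulnA -mulnDl balanced_bit_sum // mulnDl.
have succs : \sum_(i < m) (bin m.+1 (Z (twoQ_flip i v))).+1 =
    \sum_(i < m) bin m.+1 (Z (twoQ_flip i v)) + m.
  by under eq_bigr do rewrite -addn1; rewrite big_split /= sum1_card card_ord.
by rewrite succs mulnS; lia.
Qed.

Lemma balanced_antimagic (N : twoQ_vert m -> {set twoQ_vert m}) :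
  (forall (g : twoQ_vert m -> nat) v,
     weight N g v = c * g v + \sum_(i < m) g (twoQ_flip i v)) ->
  ad_antimagic_labeling N (m + c + k * (2 ^ m.+1 - 1)) 1
    (fun v => (bin m.+1 (Z v)).+1).
Proof.
move=> weightE.
have card_V : #|{: bool * {ffun 'I_m -> bool}}| = 2 ^ m.+1.
  by rewrite card_prod card_bool card_ffun card_bool card_ord expnS.
have wE v : weight N (fun v => (bin m.+1 (Z v)).+1) v =
    m + c + k * (2 ^ m.+1 - 1) + bin m.+1 (fun j => Z v j (+) heavy j).
  by rewrite weightE flip_label_sum.
split; [split | split => //; split].
- by move=> u v [/bin_inj Zuv]; apply: Z_inj.
- by move=> v; rewrite card_V bin_ltn.
- move=> u v; rewrite !wE => /addnI /bin_inj Zuv.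
  by apply: Z_inj => j /Zuv /addIb.
- move=> v; rewrite card_V wE.
  by exists (bin m.+1 (fun j => Z v j (+) heavy j)); rewrite ?bin_ltn ?muln1.
Qed.

End BalancedCode.

Definition nbit m (x : {ffun 'I_m -> bool}) (j : nat) : bool :=
  if insub j is Some i then x i else false.

Lemma nbit_ord m (x : {ffun 'I_m -> bool}) (i : 'I_m) : nbit x i = x i.
Proof. by rewrite /nbit valK. Qed.

Lemma nbit_out m (x : {ffun 'I_m -> bool}) j : m <= j -> nbit x j = false.
Proof. by move=> mj; rewrite /nbit insubN // -leqNgt. Qed.

Lemma nbit_flip m (x : {ffun 'I_m -> bool}) (i : 'I_m) j :
  nbit (flip_coord i x) j = nbit x j (+) (j == i :> nat).
Proof.
case: (ltnP j m) => [jm | mj]; last first.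
  rewrite !nbit_out // (_ : j == i :> nat = false) //.
  by apply/negbTE; rewrite neq_ltn (leq_trans (ltn_ord i) mj) orbT.
by rewrite -[j]/(val (Ordinal jm)) !nbit_ord ffunE.
Qed.

Lemma parity_nbit_flip m (x : {ffun 'I_m -> bool}) (i : 'I_m) N :
  parity N (nbit (flip_coord i x)) = parity N (nbit x) (+) (i < N).
Proof.
rewrite -parity_flip /parity; congr odd.
by apply: eq_bigr => j _; rewrite nbit_flip.
Qed.

Section Code.

Variables m k : nat.
Hypothesis k_even : ~~ odd k.
Hypothesis k2_le_m : k.*2 <= m.

(* Since k is even, rows 0, ..., k of [code v] sum to v.1 ([parity_code]);
   this is what makes [code] injective. *)
Definition code (v : twoQ_vert m) (j : nat) : bool :=
  if j == m then v.1 (+) parity k.+1 (nbit v.2)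
  else if j <= k then nbit v.2 j (+) (v.1 (+) parity k.+1 (nbit v.2))
  else nbit v.2 j (+) parity k (nbit v.2).

Definition code_col (j : nat) (i : 'I_m) : bool :=
  if j == m then i < k.+1
  else if j <= k then (i < k.+1) (+) (i == j :> nat)
  else (i < k) (+) (i == j :> nat).

Lemma code_flip v i j : code (twoQ_flip i v) j = code v j (+) code_col j i.
Proof.
rewrite /code /code_col /= !parity_nbit_flip nbit_flip (eq_sym (val i)).
case: (j == m); case: (j <= k);
  by case: (nbit v.2 j) (parity k.+1 (nbit v.2)) (parity k (nbit v.2)) v.1
    (j == i :> nat) (i < k.+1) (i < k) => [] [] [] [] [] [] [].
Qed.

Lemma code_col_balanced j : j < m.+1 ->
  k <= \sum_(i < m) code_col j i <= k.+1.
Proof.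
rewrite /code_col ltnS leq_eqVlt => /orP[/eqP -> | jm].
  by rewrite eqxx sum_ltn; lia.
rewrite ltn_eqF //; case: (leqP j k) => jk.
  by have := sum_flip (fun i => i < k.+1) jm; rewrite sum_ltn /= ltnS jk; lia.
by have := sum_flip (fun i => i < k) jm; rewrite sum_ltn /= ltnNge (ltnW jk); lia.
Qed.

Lemma code_low v j : j <= k ->
  code v j = nbit v.2 j (+) (v.1 (+) parity k.+1 (nbit v.2)).
Proof.
rewrite /code => ->; case: eqP => // ->.
by rewrite nbit_out.
Qed.

Lemma parity_code v : parity k.+1 (code v) = v.1.
Proof.
have -> : parity k.+1 (code v) =
    parity k.+1 (fun j => nbit v.2 j (+) (v.1 (+) parity k.+1 (nbit v.2))).
  by rewrite /parity; congr odd; apply: eq_bigr => j _; rewrite code_low // -ltnS.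
rewrite parity_addb /= k_even /=.
by case: (v.1); case: (parity _ _).
Qed.

Lemma code_inj u v : (forall j, j < m.+1 -> code u j = code v j) -> u = v.
Proof.
move=> codeE.
have low_codeE j : j <= k -> code u j = code v j.
  by move=> jk; apply: codeE; lia.
have E1 : u.1 = v.1.
  rewrite -parity_code -[RHS]parity_code /parity; congr odd; apply: eq_bigr => j _.
  by rewrite low_codeE // -ltnS.
have EP : parity k.+1 (nbit u.2) = parity k.+1 (nbit v.2).
  by move: (codeE m (ltnSn m)); rewrite /code eqxx E1 => /addbI.
have Elow j : j <= k -> nbit u.2 j = nbit v.2 j.
  by move=> jk; move: (low_codeE j jk); rewrite !code_low // E1 EP => /addIb.
have EP' : parity k (nbit u.2) = parity k (nbit v.2).
  by rewrite /parity; congr odd; apply: eq_bigr => j _; rewrite Elow // ltnW.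
have E2 : u.2 = v.2.
  apply/ffunP => i; rewrite -!nbit_ord; case: (leqP i k) => ik; first exact: Elow.
  move: (codeE i (ltnW (ltn_ord i))).
  by rewrite /code (ltn_eqF (ltn_ord i)) leqNgt ik /= EP' => /addIb.
by case: u v {codeE low_codeE EP Elow EP'} E1 E2 => [b x] [b' y] /= -> ->.
Qed.

End Code.

Lemma antimagic_twoQ m c k (N : twoQ_vert m -> {set twoQ_vert m}) :
  ~~ odd k -> m + c = k.*2.+1 -> c <= 1 ->
  (forall (g : twoQ_vert m -> nat) v,
     weight N g v = c * g v + \sum_(i < m) g (twoQ_flip i v)) ->
  exists f, ad_antimagic_labeling N
    (((m.+1 + c) * (2 ^ m.+1 + 1)) %/ 2 - 2 ^ m.+1) 1 f.
Proof.
move=> k_even mcE c_le1 weightE.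
have k2_le_m : k.*2 <= m by lia.
have -> : ((m.+1 + c) * (2 ^ m.+1 + 1)) %/ 2 - 2 ^ m.+1 = m + c + k * (2 ^ m.+1 - 1).
  have := expn_gt0 2 m.+1; move: (2 ^ m.+1) => P P_gt0.
  rewrite (_ : m.+1 + c = 2 * k.+1) -?mulnA ?mulKn //; nia.
exists (fun v => (bin m.+1 (code k v)).+1).
apply: (balanced_antimagic mcE c_le1 (code_inj k_even k2_le_m) (@code_flip m k)) => //.
exact: code_col_balanced.
Qed.

Theorem theorem3p11 (n : nat) :
  (n %% 4 = 2 ->
     distance_antimagic (@twoQ_adj n.-1)
       ((n * (2 ^ n + 1)) %/ 2 - 2 ^ n) 1) /\
  (n %% 4 = 1 ->
     closed_distance_antimagic (@twoQ_adj n.-1)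
       (((n + 1) * (2 ^ n + 1)) %/ 2 - 2 ^ n) 1).
Proof.
have k_even q : ~~ odd (2 * q) by rewrite mul2n odd_double.
have n_def := divn_eq n 4; set q := n %/ 4 in n_def.
split=> n_mod4.
- have -> : n = (4 * q + 1).+1 by lia.
  have := @antimagic_twoQ (4 * q + 1) 0 (2 * q) (open_nbhd (@twoQ_adj _)) (k_even q).
  rewrite [(4 * q + 1).+1 + 0]addn0; apply=> // [|g v]; first lia.
  by rewrite weight_open_twoQ.
- have -> : n = (4 * q).+1 by lia.
  apply: (@antimagic_twoQ _ 1 (2 * q)) => // [|g v]; first lia.
  by rewrite weight_closed_twoQ mul1n.
Qed.
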